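(* Let $q$ be a prime power and $n,k,\delta,\alpha$ positive integers with $k\le n$, $3\le\alpha\le\left[{k\atop 1}\right]_q$ and $\delta\ge(\alpha-1)(k-1)+1$. Then $$B_q(n,k,\delta;\alpha)\le(\alpha-1)\frac{\left[{n\atop 1}\right]_q}{\left[{k\atop 1}\right]_q+1}.$$
   Context: For a prime power $q$, $\mathcal{G}_q(n,k)$ denotes the set of all $k$-dimensional subspaces of $\mathbb{F}_q^n$, and the Gaussian binomial coefficient is $\left[{n\atop k}\right]_q=\prod_{i=0}^{k-1}\frac{q^n-q^i}{q^k-q^i}$; in particular $\left[{n\atop 1}\right]_q=\frac{q^n-1}{q-1}$. An $\alpha$-$(n,k,\delta)_q^c$ covering Grassmannian code is a subset $\mathcal{C}\subseteq\mathcal{G}_q(n,k)$ (no repeated codewords) such that every set of $\alpha$ distinct codewords of $\mathcal{C}$ spans a subspace of $\mathbb{F}_q^n$ of dimension at least $k+\delta$. $B_q(n,k,\delta;\alpha)$ denotes the maximum size of an $\alpha$-$(n,k,\delta)_q^c$ code. *)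

From HB Require Import structures.
From mathcomp Require Import all_boot all_order all_algebra all_field.
Unset Printing Implicit Defensive.
Import GRing.Theory Num.Theory.
Local Open Scope ring_scope.

Definition gauss1 (q m : nat) : rat := ((q ^ m)%:R - 1) / (q%:R - 1).

Definition covering_code (F : finFieldType) (n k delta alpha : nat)
    (C : seq {vspace 'rV[F]_n}) : Prop :=
  uniq C /\
  (forall U, U \in C -> \dim U = k) /\
  (forall S : seq {vspace 'rV[F]_n},
      uniq S -> size S = alpha -> {subset S <= C} ->
      (k + delta <= \dim (\sum_(U <- S) U)%VS)%N).

From HB Require Import structures.
From mathcomp Require Import all_boot all_order all_algebra all_field.
From mathcomp Require Import zify ring.
Import GRing.Theory Num.Theory.
Local Open Scope ring_scope.

(* Write g = (q^k - 1) + (q - 1).  We prove, for every duplicate-free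
   sublist D of the code and every set P of vectors containing the nonzero
   points of all members of D, that |D| g <= (alpha - 1) |P|; the theorem is
   the case D = C, P = F^n minus 0, divided by q - 1.  Strong induction on |P|:
   - if a nonzero point v lies in alpha - 1 members K of D, their span has
     dimension at most (alpha - 1)(k - 1) + 1, so by the covering property
     every other codeword meets it trivially.  Deleting K from D and the
     nonzero points of two members of K from P loses at most alpha - 1
     codewords and frees at least 2 q^k - q^(k-1) - 1 >= g points;
   - otherwise every nonzero point lies in at most alpha - 2 members, and
     double counting gives |D| (q^k - 1) <= (alpha - 2) |P|, which suffices
     because alpha (q - 1) <= q^k - 1.
   The file proves dimension estimates for sums of subspaces and some
   counting lemmas first, then the induction in the section CoveringCodes,
   and finally translates between the rational Gaussian binomials and
   natural numbers. *)

Section SubspaceSums.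
Context {K : fieldType} {vT : vectType K}.
Implicit Types (U W X : {vspace vT}) (S : seq {vspace vT}).

Lemma memv_sum_seq {S U x} : U \in S -> x \in U -> x \in (\sum_(W <- S) W)%VS.
Proof. by move=> US; rewrite (big_rem U US) /=; apply/subvP/addvSl. Qed.

Lemma dimv_add_meet {U X x} : x != 0 -> x \in U -> x \in X ->
  (\dim (U + X) < \dim U + \dim X)%N.
Proof.
move=> xnz xU xX; rewrite -dimv_sum_cap -[X in (X < _)%N]addn0 ltn_add2l.
rewrite lt0n dimv_eq0; apply: contraNneq xnz => UX0.
by rewrite -memv0 -UX0 memv_cap xU.
Qed.

(* Subspaces of dimension at most k through a common nonzero point: each
   one adds at most k - 1 dimensions to the span of the previous ones. *)
Lemma dimv_sum_common_point {U S v k} : v != 0 -> v \in U -> (\dim U <= k)%N ->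
  (forall W, W \in S -> v \in W /\ (\dim W <= k)%N) ->
  (\dim (U + \sum_(W <- S) W) <= (size S).+1 * (k - 1) + 1)%N.
Proof.
move=> vnz vU dU; elim: S => [|W S IH] hS.
  by rewrite big_nil addv0 /=; lia.
have [vW dW] := hS W (mem_head _ _).
have {}IH := IH (fun W' W'S => hS W' (mem_behead (s := W :: S) W'S)).
rewrite big_cons addvA [(U + W)%VS]addvC -addvA.
have vUS : v \in (U + \sum_(W' <- S) W')%VS by apply: subvP (addvSl _ _) _ vU.
have := dimv_add_meet vnz vW vUS; rewrite /=; nia.
Qed.

End SubspaceSums.

Lemma choose_members {T : eqType} {p : pred T} {D : seq T} {m} :
  uniq D -> (m <= count p D)%N ->
  exists K, [/\ uniq K, size K = m, {subset K <= D} & all p K].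
Proof.
move=> uD hm; exists (take m (filter p D)).
have sub x : x \in take m (filter p D) -> x \in filter p D := @mem_take _ _ _ x.
split.
- exact/take_uniq/filter_uniq.
- by rewrite size_takel // size_filter.
- by move=> x /sub; rewrite mem_filter => /andP[].
- by apply/allP => x /sub; rewrite mem_filter => /andP[].
Qed.

Lemma size_filter_notin (T : eqType) (D K : seq T) : uniq D ->
  (size D <= size [seq x <- D | x \notin K] + size K)%N.
Proof.
move=> uD; have := count_predC (mem K) D.
have : (count (mem K) D <= size K)%N.
  rewrite -size_filter; apply: uniq_leq_size; first exact: filter_uniq.
  by move=> x; rewrite mem_filter => /andP[].
have -> : size [seq x <- D | x \notin K] = count (predC (mem K)) D.
  by rewrite size_filter.
lia.
Qed.

Lemma double_count (T : finType) (I : eqType) (f : I -> {set T}) (A : {set T})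
    (D : seq I) :
  (forall i, i \in D -> f i \subset A) ->
  (\sum_(i <- D) #|f i| = \sum_(x in A) count (fun i => x \in f i) D)%N.
Proof.
elim: D => [|i D IH] sub; first by rewrite big_nil big1.
rewrite big_cons big_split /= IH; last by move=> j jD; apply: sub; rewrite inE jD orbT.
congr (_ + _)%N; rewrite -big_mkcondr sum1_card.
apply: eq_card => x; rewrite [in RHS]unfold_in /= andb_idl //.
exact: (subsetP (sub i (mem_head _ _))).
Qed.

(* The arithmetic of the sparse case: with A = q^k - 1 and B = q - 1. *)
Lemma sparse_arith (s N A B a : nat) : (3 <= a)%N -> (a * B <= A)%N ->
  (s * A <= (a - 2) * N)%N -> (s * (A + B) <= (a - 1) * N)%N.
Proof.
move=> a3 aBA sA.
have sB : (s * B <= N)%N.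
  have : (a * (s * B) <= a * N)%N by nia.
  by rewrite leq_pmul2l //; lia.
nia.
Qed.

Section CoveringCodes.
Context {F : finFieldType} {n k delta alpha : nat} {C : seq {vspace 'rV[F]_n}}.
Hypothesis hC : covering_code F n k delta alpha C.
Hypothesis ha3 : (3 <= alpha)%N.
Hypothesis hdelta : ((alpha - 1) * (k - 1) + 1 <= delta)%N.
Hypothesis hak : (alpha * (#|F| - 1) <= #|F| ^ k - 1)%N.

Local Notation q := #|F|.
Local Notation gain := (q ^ k - 1 + (q - 1))%N.
Implicit Types (U W : {vspace 'rV[F]_n}) (D K : seq {vspace 'rV[F]_n}).
Implicit Types (P : {set 'rV[F]_n}).

Lemma field_size_gt1 : (1 < q)%N.
Proof. exact: card_finNzRing_gt1. Qed.

Definition punctured U : {set 'rV[F]_n} := [set x in U] :\ 0.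

(* The invariant of the induction: P still contains the nonzero points of
   every member of D. *)
Definition covered D P := forall U, U \in D -> punctured U \subset P.

Lemma card_punctured U : #|punctured U| = (q ^ \dim U - 1)%N.
Proof.
have := cardsD1 0 [set x in U]; rewrite inE mem0v cardsE card_vspace.
by rewrite /punctured add1n => ->; rewrite subn1.
Qed.

(* Two distinct k-dimensional subspaces meet in dimension at most k - 1, so
   together they have at least 2 q^k - q^(k-1) - 1 >= g nonzero points. *)
Lemma card_punctured_union U1 U2 : \dim U1 = k -> \dim U2 = k -> U1 != U2 ->
  (gain <= #|punctured U1 :|: punctured U2|)%N.
Proof.
move=> d1 d2 U12.
have meet : punctured U1 :&: punctured U2 = punctured (U1 :&: U2).
  by apply/setP => x; rewrite !inE memv_cap andbACA andbb.
have ltd : (\dim (U1 :&: U2) < k)%N.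
  rewrite ltn_neqAle -[X in (_ <= X)%N]d1 dimvS ?capvSl // andbT.
  apply: contraNneq U12 => dk.
  have eq_cap U : \dim U = k -> (U1 :&: U2 <= U)%VS -> U = (U1 :&: U2)%VS.
    by move=> dU sU; apply/esym/eqP; rewrite eqEdim sU dU dk leqnn.
  by rewrite (eq_cap U1 d1 (capvSl _ _)) -(eq_cap U2 d2 (capvSr _ _)).
have := cardsUI (punctured U1) (punctured U2).
rewrite meet !card_punctured d1 d2.
set d := \dim _ in ltd *.
have hq := field_size_gt1.
have qk : (q ^ k = q * q ^ (k - 1))%N by rewrite -expnS; congr (_ ^ _)%N; lia.
have qd : (1 <= q ^ d <= q ^ (k - 1))%N.
  by rewrite expn_gt0 (ltnW hq) leq_exp2l //; lia.
nia.
Qed.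

Lemma code_dim {U} : U \in C -> \dim U = k.
Proof. by case: hC => _ [dimC _]; apply: dimC. Qed.

(* Any codeword outside a family K of alpha - 1 codewords through a common
   nonzero point meets the span of K trivially: K spans at most
   (alpha - 1)(k - 1) + 1 dimensions, so a nontrivial meeting would make the
   alpha codewords span fewer than k + delta dimensions. *)
Lemma covering_meet_trivial {K v W w} : uniq K -> size K = (alpha - 1)%N ->
  {subset K <= C} -> v != 0 -> (forall U, U \in K -> v \in U) ->
  W \in C -> W \notin K -> w \in W -> w \in (\sum_(U <- K) U)%VS -> w = 0.
Proof.
move=> uK sK KC vnz vK WC WK wW wK; apply/eqP; apply: contraT => wnz.
case: K uK sK KC vK WK wK => [|U K] uK /= sK KC vK WK wK; first lia.
rewrite big_cons in wK.
have UC : U \in C by apply: KC; apply: mem_head.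
have spread : (k + delta <= \dim (\sum_(U' <- W :: U :: K) U'))%N.
  case: hC => _ [_ cover]; apply: cover => /=.
  - by rewrite WK.
  - lia.
  - by move=> U'; rewrite inE => /predU1P[->|/KC].
have hK W' : W' \in K -> v \in W' /\ (\dim W' <= k)%N.
  by move=> W'K; rewrite vK ?code_dim ?KC // inE W'K orbT.
have narrow := dimv_sum_common_point vnz (vK U (mem_head _ _)) (eq_leq (code_dim UC)) hK.
rewrite !big_cons in spread; rewrite sK in narrow.
have := dimv_add_meet wnz wW wK; rewrite (code_dim WC); nia.
Qed.

Lemma peel_common_point {D P v} : uniq D -> {subset D <= C} -> covered D P ->
  v != 0 -> (alpha - 1 <= count (fun U => v \in U) D)%N ->
  exists D' P', [/\ uniq D', {subset D' <= C}, covered D' P',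
    (size D <= size D' + (alpha - 1))%N & (gain + #|P'| <= #|P|)%N].
Proof.
move=> uD DC cov vnz cnt.
have [K [uK sK KD /allP vK]] := choose_members uD cnt.
have KC : {subset K <= C} by move=> U /KD /DC.
have [U1 [U2 [K' eK]]] : exists U1 U2 K', K = U1 :: U2 :: K'.
  by case: K sK {uK KD vK KC} => [|U1 [|U2 K']] /= sK; [lia | lia | exists U1, U2, K'].
have U1K : U1 \in K by rewrite eK mem_head.
have U2K : U2 \in K by rewrite eK !inE eqxx orbT.
have U12 : U1 != U2 by move: uK; rewrite eK /= inE negb_or => /andP[/andP[]].
set Y := punctured U1 :|: punctured U2.
exists [seq U <- D | U \notin K], (P :\: Y); split.
- exact: filter_uniq.
- by move=> U; rewrite mem_filter => /andP[_ /DC].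
- move=> U; rewrite mem_filter => /andP[UK UD]; apply/subsetP => x xU.
  rewrite inE (subsetP (cov U UD) x xU) andbT; apply/negP => xY.
  move: xU; rewrite !inE => /andP[xnz xU].
  have xK : x \in (\sum_(W <- K) W)%VS.
    move: xY; rewrite !inE xnz => /orP[] xUi.
    - exact: memv_sum_seq U1K xUi.
    - exact: memv_sum_seq U2K xUi.
  by move: xnz; rewrite (covering_meet_trivial uK sK KC vnz vK (DC U UD) UK xU xK) eqxx.
- by rewrite -sK; exact: size_filter_notin.
- have YP : Y \subset P by rewrite subUset !cov ?KD.
  have := cardsID Y P; rewrite (setIidPr YP) => <-.
  by rewrite leq_add2r card_punctured_union ?code_dim ?KC.
Qed.

Lemma sparse_bound D P : {subset D <= C} -> covered D P ->
  (forall x, x != 0 -> (count (fun U => x \in U) D <= alpha - 2)%N) ->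
  (size D * gain <= (alpha - 1) * #|P|)%N.
Proof.
move=> DC cov sparse; apply: sparse_arith => //.
have -> : (size D * (q ^ k - 1) = \sum_(U <- D) #|punctured U|)%N.
  rewrite (eq_big_seq (fun=> q ^ k - 1)%N) => [|U UD].
    by rewrite big_const_seq count_predT iter_addn_0 mulnC.
  by rewrite card_punctured code_dim ?DC.
rewrite (@double_count _ _ punctured P D cov) mulnC -sum_nat_const; apply: leq_sum => x _.
have [-> | xnz] := eqVneq x 0.
  by rewrite (@eq_count _ _ pred0) ?count_pred0 // => U; rewrite !inE eqxx.
by rewrite (eq_count (a2 := fun U => x \in U)) ?sparse // => U; rewrite !inE xnz.
Qed.

Lemma free_points_bound {D P} : uniq D -> {subset D <= C} -> covered D P ->
  (size D * gain <= (alpha - 1) * #|P|)%N.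
Proof.
have [m] := ubnP #|P|; elim: m D P => // m IH D P ltPm uD DC cov.
have [/existsP[v /andP[vnz cnt]] | /existsPn sparse] :=
  boolP [exists v, (v != 0) && (alpha - 1 <= count (fun U => v \in U) D)%N].
- have [D' [P' [uD' D'C cov' sizeD cardP]]] := peel_common_point uD DC cov vnz cnt.
  have gain_pos : (0 < gain)%N by have := field_size_gt1; lia.
  have ltP'm : (#|P'| < m)%N by lia.
  have := IH D' P' ltP'm uD' D'C cov'; nia.
- apply: sparse_bound => // x xnz; move: (sparse x); rewrite xnz /= -ltnNge.
  by move: ha3; lia.
Qed.

End CoveringCodes.

Lemma gauss1E (q m : nat) : (0 < q)%N -> gauss1 q m = (q ^ m - 1)%:R / (q - 1)%:R.
Proof. by move=> q0; rewrite /gauss1 !natrB // expn_gt0 q0. Qed.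

Lemma gauss1_ge (q k a : nat) : (1 < q)%N ->
  (a%:R <= gauss1 q k :> rat) = (a * (q - 1) <= q ^ k - 1)%N.
Proof.
move=> q1; rewrite gauss1E ?(ltnW q1) // ler_pdivlMr ?ltr0n ?subn_gt0 //.
by rewrite -natrM ler_nat.
Qed.

Lemma gauss1_ratio_bound (q k m s a : nat) : (1 < q)%N ->
  (s * (q ^ k - 1 + (q - 1)) <= a * (q ^ m - 1))%N ->
  s%:R <= a%:R * gauss1 q m / (gauss1 q k + 1) :> rat.
Proof.
move=> q1 h; have Q0 : (q - 1)%:R != 0 :> rat by rewrite pnatr_eq0 -lt0n subn_gt0.
have G0 : 0 < (q ^ k - 1 + (q - 1))%:R :> rat by rewrite ltr0n addn_gt0 !subn_gt0 q1 orbT.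
have -> : a%:R * gauss1 q m / (gauss1 q k + 1) =
    (a * (q ^ m - 1))%:R / (q ^ k - 1 + (q - 1))%:R :> rat.
  rewrite !gauss1E ?(ltnW q1) // natrM natrD; field.
  by rewrite -natrD lt0r_neq0 // Q0.
by rewrite ler_pdivlMr // -natrM ler_nat.
Qed.

Theorem mainTheorem5 (F : finFieldType) (n k delta alpha : nat)
  (hn : (0 < n)%N) (hk : (0 < k)%N) (hd : (0 < delta)%N) (hkn : (k <= n)%N)
  (ha3 : (3 <= alpha)%N) (hak : alpha%:R <= gauss1 #|F| k)
  (hdelta : ((alpha - 1) * (k - 1) + 1 <= delta)%N)
  (C : seq {vspace 'rV[F]_n}) (hC : covering_code F n k delta alpha C) :
  (size C)%:R <= (alpha - 1)%:R * gauss1 #|F| n / (gauss1 #|F| k + 1) :> rat.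
Proof.
have hq : (1 < #|F|)%N := field_size_gt1.
rewrite gauss1_ge // in hak.
apply: gauss1_ratio_bound => //.
have cov0 : covered C [set~ 0] by move=> U _; apply/subsetP => x; rewrite !inE => /andP[].
have := free_points_bound hC ha3 hdelta hak (proj1 hC) (fun U UC => UC) cov0.
by rewrite cardsC1 card_mx mul1n -subn1.
Qed.
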